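(* Fix positive constants $P_a$, $P_J^{\max}$, $G_{aw,f}$, $G_{aw,s}$, $L_{aw}$, $\sigma_w^2$, and fixed realizations $|\tilde h_{aw,f}|^2>0$, $|\tilde h_{aw,s}|^2>0$ of the fading power gains. Let $P_J$ be a random variable uniformly distributed on $[0,P_J^{\max}]$. Define $$T_w^{\mathbb H_0}=P_J G_{aw,s}L_{aw}|\tilde h_{aw,s}|^2+\sigma_w^2,\qquad T_w^{\mathbb H_1}=P_aG_{aw,f}L_{aw}|\tilde h_{aw,f}|^2+P_J G_{aw,s}L_{aw}|\tilde h_{aw,s}|^2+\sigma_w^2 .$$ For a threshold $\tau\in\mathbb R$, Willie decides $\mathbb H_1$ if his statistic exceeds $\tau$ and $\mathbb H_0$ otherwise; let $P_{\rm FA}(\tau)=\Pr(T_w^{\mathbb H_0}>\tau)$, $P_{\rm MD}(\tau)=\Pr(T_w^{\mathbb H_1}<\tau)$ (probabilities over $P_J$), and $P_{e,w}(\tau)=P_{\rm FA}(\tau)+P_{\rm MD}(\tau)$. Set $\lambda_1=P_J^{\max}G_{aw,s}L_{aw}|\tilde h_{aw,s}|^2+\sigma_w^2$ and $\lambda_2=P_aG_{aw,f}L_{aw}|\tilde h_{aw,f}|^2+\sigma_w^2$. Then a threshold $\tau^*$ minimizing $P_{e,w}(\tau)$ lies in $[\lambda_1,\lambda_2]$ if $\lambda_1<\lambda_2$ and in $[\lambda_2,\lambda_1]$ if $\lambda_1\ge\lambda_2$, and the minimum detection error is $$P_{e,w}^*=\begin{cases}0,&\lambda_1<\lambda_2,\\[2pt]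 1-\dfrac{P_aG_{aw,f}|\tilde h_{aw,f}|^2}{P_J^{\max}G_{aw,s}|\tilde h_{aw,s}|^2},&\lambda_1\ge\lambda_2.\end{cases}$$
   Context: Setting: a transmitter Alice has two antenna arrays; the first sends a covert signal with known power $P_a$, the second sends a jamming signal with power $P_J$, which is unknown to the warden Willie and uniform on $[0,P_J^{\max}]$, independently from block to block. $G_{aw,f}$ and $G_{aw,s}$ are the total directivity gains from Alice's first and second arrays to Willie, $L_{aw}$ is the path loss, $\tilde h_{aw,f},\tilde h_{aw,s}$ are fading coefficients (known to Willie and constant over a block), and $\sigma_w^2$ is Willie's noise variance. Willie uses the radiometer statistic $T_w=\frac1n\sum_{i=1}^n|\mathbf y_w(i)|^2$ compared to a threshold $\tau$; in the limit of infinite block length $n\to\infty$, $T_w$ equals $T_w^{\mathbb H_0}$ under hypothesis $\mathbb H_0$ (Alice not transmitting the covert signal) and $T_w^{\mathbb H_1}$ under $\mathbb H_1$ (Alice transmitting), as given in the claim. *)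

From HB Require Import structures.
From mathcomp Require Import all_boot all_order all_algebra.
From mathcomp Require Import all_classical all_reals all_analysis.
Set Implicit Arguments. Unset Strict Implicit. Unset Printing Implicit Defensive.
Import Order.TTheory GRing.Theory Num.Theory.
Local Open Scope classical_set_scope.
Local Open Scope ring_scope.

(* Willie's radiometer statistic (n -> oo) as a function of the jamming power PJ *)
Definition TwH0 (R : realType) (Gs L hs s2 : R) (PJ : R) : R :=
  PJ * Gs * L * hs + s2.
Definition TwH1 (R : realType) (Pa Gf hf Gs L hs s2 : R) (PJ : R) : R :=
  Pa * Gf * L * hf + PJ * Gs * L * hs + s2.

Definition P_FA (R : realType) (PJmax : R) (hP : 0 < PJmax)
    (Gs L hs s2 : R) (tau : R) : \bar R :=
  uniform_prob hP [set PJ | tau < TwH0 Gs L hs s2 PJ].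
Definition P_MD (R : realType) (PJmax : R) (hP : 0 < PJmax)
    (Pa Gf hf Gs L hs s2 : R) (tau : R) : \bar R :=
  uniform_prob hP [set PJ | TwH1 Pa Gf hf Gs L hs s2 PJ < tau].
Definition P_ew (R : realType) (PJmax : R) (hP : 0 < PJmax)
    (Pa Gf hf Gs L hs s2 : R) (tau : R) : \bar R :=
  (P_FA hP Gs L hs s2 tau + P_MD hP Pa Gf hf Gs L hs s2 tau)%E.

From HB Require Import structures.
From mathcomp Require Import all_boot all_order all_algebra.
From mathcomp Require Import all_classical all_reals all_analysis.
From mathcomp Require Import ring lra.
Set Implicit Arguments. Unset Strict Implicit. Unset Printing Implicit Defensive.
Import Order.TTheory GRing.Theory Num.Theory.
Local Open Scope classical_set_scope.
Local Open Scope ring_scope.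

(* Since P_J is uniform, P_FA and P_MD are the affine functions (l1 - tau) / K
   and (tau - l2) / K clamped to [0, 1], where K = P_J^max G_aw,s L_aw |h_aw,s|^2.
   Their arguments sum to the constant (l1 - l2) / K < 1, and clamping to [0, 1]
   is subadditive, with equality below 1 exactly when both arguments have the
   same sign, i.e. when tau lies between l1 and l2. *)

Lemma mul_subr_ge0_between (R : realDomainType) (a b t : R) :
  (0 <= (a - t) * (t - b)) = (if a < b then a <= t <= b else b <= t <= a).
Proof.
case: (ltgtP t a) => [ta|a_t|->] /=.
- rewrite pmulr_rge0 ?subr_gt0 // subr_ge0 andbT; case: (ltP a b) => // ab.
  by apply/negbTE; rewrite -ltNge; lra.
- rewrite nmulr_rge0 ?subr_lt0 // subr_le0 andbF; case: (ltP a b) => // ab.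
  by apply/negbTE; rewrite -ltNge; lra.
- by rewrite subrr mul0r lexx andbT; case: (ltP a b) => // /ltW.
Qed.

Section clamp01.
Variable R : realDomainType.
Implicit Types u v : R.

Definition clamp01 u := Num.max 0 (Num.min u 1).

Lemma clamp01E u : clamp01 u = if u <= 0 then 0 else if u <= 1 then u else 1.
Proof.
rewrite /clamp01 /Order.min /Order.max.
case: (ltP u 1) => u1; case: (ltP 0 u) => u0; rewrite ?ltr01;
  case: (leP u 0) => u0'; case: (leP u 1) => u1'; lra.
Qed.

Lemma clamp01_le0 u : u <= 0 -> clamp01 u = 0.
Proof. by rewrite clamp01E => ->. Qed.

Lemma clamp01_ge1 u : 1 <= u -> clamp01 u = 1.
Proof. by move=> u1; rewrite clamp01E; case: (leP u 0); case: (leP u 1); lra. Qed.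

Lemma clamp01_id u : 0 <= u <= 1 -> clamp01 u = u.
Proof.
rewrite clamp01E => /andP[u0 ->]; case: (leP u 0) => // u0'.
by apply/eqP; rewrite eq_le u0' u0.
Qed.

Lemma clamp01D_le u v : clamp01 (u + v) <= clamp01 u + clamp01 v.
Proof.
rewrite !clamp01E; case: (leP u 0); case: (leP v 0); case: (leP (u + v) 0);
  case: (leP u 1); case: (leP v 1); case: (leP (u + v) 1); lra.
Qed.

Lemma clamp01D_lt u v : u < 0 < v -> u + v < 1 ->
  clamp01 (u + v) < clamp01 u + clamp01 v.
Proof.
move=> /andP[u0 v0] uv1; rewrite (clamp01_le0 (ltW u0)) add0r !clamp01E.
by case: (leP v 0); case: (leP v 1); case: (leP (u + v) 0); case: (leP (u + v) 1); lra.
Qed.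

Lemma clamp01D_eq u v : u + v < 1 ->
  clamp01 u + clamp01 v = clamp01 (u + v) <-> 0 <= u * v.
Proof.
wlog le_uv : u v / u <= v.
  move=> H uv1; case: (leP u v) => [uv | /ltW vu]; first exact: H.
  by rewrite addrC mulrC [u + v]addrC; apply: H; rewrite // addrC.
move=> uv1; case: (ltgtP u 0) => [u0|u0|->]; last first.
- by rewrite mul0r lexx clamp01_le0 // !add0r.
- have v0 : 0 < v by apply: lt_le_trans le_uv.
  split=> _; first exact: mulr_ge0 (ltW u0) (ltW v0).
  by rewrite !clamp01_id //; apply/andP; split; lra.
case: (ltgtP v 0) => [v0|v0|->].
- split=> _; first exact: mulr_le0 (ltW u0) (ltW v0).
  by rewrite !clamp01_le0 ?addr0 //; lra.
- split=> [/esym/eqP|]; first by rewrite lt_eqF ?clamp01D_lt ?u0.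
  by rewrite nmulr_rge0 // leNgt v0.
- by rewrite mulr0 lexx (clamp01_le0 (lexx 0)) !addr0.
Qed.
End clamp01.

Section uniform_threshold.
Variables (R : realType) (a b : R) (ab : a < b).
Local Notation mu := (@lebesgue_measure R).

Lemma uniform_probI (U : set R) :
  uniform_prob ab U = uniform_prob ab (U `&` `[a, b]).
Proof.
by rewrite /uniform_prob integral_uniform_pdf [RHS]integral_uniform_pdf -setIA setIid.
Qed.

Lemma uniform_prob_itv (i : interval R) : [set` i] `<=` `[a, b] ->
  uniform_prob ab [set` i] = (mu [set` i] * ((b - a)^-1)%:E)%E.
Proof.
move=> iab; rewrite /uniform_prob (eq_integral (cst (b - a)^-1%:E)).
  by rewrite integral_cst //= muleC.
by move=> x; rewrite inE => /iab; rewrite /= in_itv/= /uniform_pdf => ->.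
Qed.

Lemma uniform_prob_gt c :
  uniform_prob ab [set x | c < x] = (clamp01 ((b - c) / (b - a)))%:E.
Proof.
have ba : 0 < b - a by rewrite subr_gt0.
rewrite uniform_probI; case: (ltP c a) => [ca|ac]; last case: (ltP c b) => [cb|bc].
- have -> : [set x | c < x] `&` `[a, b] = `[a, b]%classic.
    apply/seteqP; split=> x /=; rewrite in_itv/=; first by case.
    by move=> /andP[ax xb]; split; [lra | apply/andP].
  rewrite uniform_prob_itv // lebesgue_measure_itv/= lte_fin ab -EFinM.
  by rewrite divff ?gt_eqF // clamp01_ge1 // ler_pdivlMr // mul1r; lra.
- have -> : [set x | c < x] `&` `[a, b] = `]c, b]%classic.
    apply/seteqP; split=> x /=; rewrite !in_itv/=; first by case=> -> /andP[].
    by move=> /andP[cx xb]; split; [|apply/andP; split]; lra.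
  rewrite uniform_prob_itv => [|x /=]; last first.
    by rewrite !in_itv/= => /andP[cx ->]; rewrite andbT; lra.
  rewrite lebesgue_measure_itv/= lte_fin cb -EFinD -EFinM clamp01_id //.
  by rewrite divr_ge0 ?ler_pdivrMr ?mul1r; lra.
- have -> : [set x | c < x] `&` `[a, b] = set0.
    by apply/seteqP; split=> x //=; rewrite in_itv/= => -[cx /andP[]]; lra.
  rewrite /uniform_prob integral_set0 clamp01_le0 //.
  by rewrite pmulr_lle0 ?invr_gt0; lra.
Qed.

Lemma uniform_prob_lt c :
  uniform_prob ab [set x | x < c] = (clamp01 ((c - a) / (b - a)))%:E.
Proof.
have ba : 0 < b - a by rewrite subr_gt0.
rewrite uniform_probI; case: (leP c a) => [ca|ac]; last case: (leP c b) => [cb|bc].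
- have -> : [set x | x < c] `&` `[a, b] = set0.
    by apply/seteqP; split=> x //=; rewrite in_itv/= => -[xc /andP[]]; lra.
  rewrite /uniform_prob integral_set0 clamp01_le0 //.
  by rewrite pmulr_lle0 ?invr_gt0; lra.
- have -> : [set x | x < c] `&` `[a, b] = `[a, c[%classic.
    apply/seteqP; split=> x /=; rewrite !in_itv/=; first by case=> -> /andP[->].
    by move=> /andP[ax xc]; split; [|apply/andP; split]; lra.
  rewrite uniform_prob_itv => [|x /=]; last first.
    by rewrite !in_itv/= => /andP[-> xc]; lra.
  rewrite lebesgue_measure_itv/= lte_fin ac -EFinD -EFinM clamp01_id //.
  by rewrite divr_ge0 ?ler_pdivrMr ?mul1r; lra.
- have -> : [set x | x < c] `&` `[a, b] = `[a, b]%classic.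
    apply/seteqP; split=> x /=; rewrite in_itv/=; first by case.
    by move=> /andP[ax xb]; split; [lra | apply/andP].
  rewrite uniform_prob_itv // lebesgue_measure_itv/= lte_fin ab -EFinM.
  by rewrite divff ?gt_eqF // clamp01_ge1 // ler_pdivlMr // mul1r; lra.
Qed.

Lemma uniform_prob_affine_gt k d c : 0 < k ->
  uniform_prob ab [set x | c < x * k + d] =
  (clamp01 ((b * k + d - c) / ((b - a) * k)))%:E.
Proof.
move=> k0; have -> : [set x | c < x * k + d] = [set x | (c - d) / k < x].
  by apply/seteqP; split=> x /=; rewrite ltr_pdivrMr //; lra.
rewrite uniform_prob_gt; congr (clamp01 _)%:E.
by field; rewrite !gt_eqF // subr_gt0.
Qed.

Lemma uniform_prob_affine_lt k d c : 0 < k ->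
  uniform_prob ab [set x | x * k + d < c] =
  (clamp01 ((c - a * k - d) / ((b - a) * k)))%:E.
Proof.
move=> k0; have -> : [set x | x * k + d < c] = [set x | x < (c - d) / k].
  by apply/seteqP; split=> x /=; rewrite ltr_pdivlMr //; lra.
rewrite uniform_prob_lt; congr (clamp01 _)%:E.
by field; rewrite !gt_eqF // subr_gt0.
Qed.
End uniform_threshold.

Lemma P_FAE (R : realType) (PJmax : R) (hP : 0 < PJmax) (Gs L hs s2 tau : R) :
  0 < Gs * L * hs ->
  P_FA hP Gs L hs s2 tau =
  (clamp01 ((PJmax * Gs * L * hs + s2 - tau) / (PJmax * Gs * L * hs)))%:E.
Proof.
move=> k0; rewrite /P_FA /TwH0.
rewrite [X in uniform_prob _ X](_ : _ = [set x | tau < x * (Gs * L * hs) + s2]).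
  by rewrite uniform_prob_affine_gt // subr0 !mulrA.
by apply/seteqP; split=> x /=; rewrite !mulrA.
Qed.

Lemma P_MDE (R : realType) (PJmax : R) (hP : 0 < PJmax) (Pa Gf hf Gs L hs s2 tau : R) :
  0 < Gs * L * hs ->
  P_MD hP Pa Gf hf Gs L hs s2 tau =
  (clamp01 ((tau - (Pa * Gf * L * hf + s2)) / (PJmax * Gs * L * hs)))%:E.
Proof.
move=> k0; rewrite /P_MD /TwH1.
rewrite [X in uniform_prob _ X](_ : _ =
    [set x | x * (Gs * L * hs) + (Pa * Gf * L * hf + s2) < tau]).
  by rewrite uniform_prob_affine_lt // mul0r !subr0 !mulrA.
by apply/seteqP; split=> x /=; rewrite !mulrA addrCA addrA.
Qed.

Theorem theorem1 (R : realType) (Pa PJmax Gf Gs L s2 hf hs : R)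
  (hPa : 0 < Pa) (hP : 0 < PJmax) (hGf : 0 < Gf) (hGs : 0 < Gs)
  (hL : 0 < L) (hs2 : 0 < s2) (hhf : 0 < hf) (hhs : 0 < hs) :
  let l1 := PJmax * Gs * L * hs + s2 in
  let l2 := Pa * Gf * L * hf + s2 in
  let Pstar := if l1 < l2 then 0 else 1 - (Pa * Gf * hf) / (PJmax * Gs * hs) in
  let in_range := fun tau : R =>
    if l1 < l2 then l1 <= tau <= l2 else l2 <= tau <= l1 in
  (forall tau : R, (Pstar%:E <= P_ew hP Pa Gf hf Gs L hs s2 tau)%E) /\
  (exists tau : R, in_range tau /\ P_ew hP Pa Gf hf Gs L hs s2 tau = Pstar%:E) /\
  (forall tau : R, P_ew hP Pa Gf hf Gs L hs s2 tau = Pstar%:E -> in_range tau).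
Proof.
move=> l1 l2 Pstar in_range.
set K := PJmax * Gs * L * hs.
have K0 : 0 < K by rewrite !mulr_gt0.
have Pew tau : P_ew hP Pa Gf hf Gs L hs s2 tau =
    (clamp01 ((l1 - tau) / K) + clamp01 ((tau - l2) / K))%:E.
  by rewrite /P_ew P_FAE ?P_MDE ?mulr_gt0.
have sumE tau : (l1 - tau) / K + (tau - l2) / K = (l1 - l2) / K.
  by rewrite -mulrDl addrA subrK.
have sum_lt1 : (l1 - l2) / K < 1.
  have B0 : 0 < Pa * Gf * L * hf by rewrite !mulr_gt0.
  by rewrite ltr_pdivrMr // mul1r /l1 /l2 -/K; lra.
have PstarE : Pstar = clamp01 ((l1 - l2) / K).
  rewrite /Pstar; case: ltP => l12.
    by rewrite clamp01_le0 // pmulr_lle0 ?invr_gt0 //; lra.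
  rewrite clamp01_id ?divr_ge0 ?subr_ge0 ?(ltW sum_lt1) ?(ltW K0) //.
  by rewrite /l1 /l2 /K; field; rewrite !gt_eqF.
have rangeE tau : in_range tau = (0 <= (l1 - tau) / K * ((tau - l2) / K)).
  by rewrite mulrACA pmulr_lge0 ?mulr_gt0 ?invr_gt0 // mul_subr_ge0_between.
have optimalE tau : clamp01 ((l1 - tau) / K) + clamp01 ((tau - l2) / K) =
    clamp01 ((l1 - l2) / K) <-> in_range tau.
  by rewrite rangeE -(sumE tau); apply: clamp01D_eq; rewrite sumE.
split; [|split].
- by move=> tau; rewrite Pew PstarE lee_fin -(sumE tau) clamp01D_le.
- exists l1; have in_l1 : in_range l1 by rewrite rangeE subrr !mul0r.
  by split=> //; rewrite Pew PstarE; congr _%:E; apply/optimalE.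
- by move=> tau; rewrite Pew PstarE => -[/optimalE].
Qed.
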